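(* Let $M$ be a countable $\aleph_0$-categorical structure with no algebraicity that admits weak elimination of imaginaries. Then for all $A,B\subseteq M$, $$\mathrm{acl}^{eq}A\cap \mathrm{acl}^{eq}B=\mathrm{dcl}^{eq}(A\cap B).$$
   Context: $G=\operatorname{Aut}(M)$; for finite $A$, $G_A$ is the pointwise stabilizer. $M^{eq}$ is the disjoint union of $M^k/E$ over all $k$ and all $G$-invariant equivalence relations $E$ on $M^k$, with $M\subseteq M^{eq}$ via equality on $M^1$. For finite $A\subseteq M^{eq}$: $\mathrm{acl}^{eq}A=\{e: G_A\cdot e \text{ finite}\}$, $\mathrm{dcl}^{eq}A=\{e: G_A\cdot e=\{e\}\}$; for infinite $A$ take the union over finite subsets. No algebraicity: for every finite $A\subseteq M$, all $G_A$-orbits on $M\setminus A$ are infinite. Weak elimination of imaginaries: for every $e\in M^{eq}$ there is a real tuple $\bar a$ with $e\in\mathrm{dcl}^{eq}\bar a$ and $\bar a\in\mathrm{acl}^{eq}e$. *)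

From Stdlib Require Import List.
From mathcomp Require Import ssreflect ssrfun ssrbool eqtype ssrnat fintype.

Set Implicit Arguments.
Unset Strict Implicit.
Unset Printing Implicit Defensive.

Section Defs.
Variable M : Type.

(** A (relational) structure on M: a family of relations indexed by symbols
    [l : L], each relation a predicate on finite tuples (lists) of M. *)

Definition Aut (L : Type) (R : L -> list M -> Prop) (g : M -> M) : Prop :=
  bijective g /\ forall (l : L) (s : list M), R l (List.map g s) <-> R l s.

Variable G : (M -> M) -> Prop.

Definition countable_type : Prop := exists f : M -> nat, injective f.

(** G is oligomorphic: finitely many G-orbits on M^n for every n
    (Ryll-Nardzewski characterisation of aleph_0-categoricity). *)
Definition oligomorphic : Prop :=
  forall n : nat, exists reps : list ('I_n -> M),
    forall a : 'I_n -> M, exists r g,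
      List.In r reps /\ G g /\ forall i, a i = g (r i).

(** Imaginaries: an element of M^k/E is given by its sort (k, E) and a
    representative k-tuple. *)
Record imag := Imag {
  isort : nat;
  irel : ('I_isort -> M) -> ('I_isort -> M) -> Prop;
  irep : 'I_isort -> M }.
Arguments irel : clear implicits.
Arguments irep : clear implicits.

Definition is_imag (e : imag) : Prop :=
  (forall a, irel e a a) /\
  (forall a b, irel e a b -> irel e b a) /\
  (forall a b c, irel e a b -> irel e b c -> irel e a c) /\
  (forall g, G g -> forall a b, irel e a b <-> irel e (g \o a) (g \o b)).

Definition realI (x : M) : imag :=
  @Imag 1 (fun a b => forall i, a i = b i) (fun _ => x).

Definition fixes (g : M -> M) (e : imag) : Prop := irel e (g \o irep e) (irep e).

Definition stab (A : list imag) (g : M -> M) : Prop :=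
  G g /\ forall e, List.In e A -> fixes g e.

Definition acl_fin (A : list imag) (e : imag) : Prop :=
  exists hs : list (M -> M),
    (forall h, List.In h hs -> stab A h) /\
    forall g, stab A g -> exists h, List.In h hs /\ irel e (g \o irep e) (h \o irep e).

Definition dcl_fin (A : list imag) (e : imag) : Prop :=
  forall g, stab A g -> fixes g e.

(** acl^eq and dcl^eq of an arbitrary set A of real elements:
    union over finite subsets. *)
Definition aclR (A : M -> Prop) (e : imag) : Prop :=
  exists l : list M, (forall x, List.In x l -> A x) /\ acl_fin (List.map realI l) e.

Definition dclR (A : M -> Prop) (e : imag) : Prop :=
  exists l : list M, (forall x, List.In x l -> A x) /\ dcl_fin (List.map realI l) e.

(** No algebraicity: for every finite A ⊆ M, all G_A-orbits on M \ A are infinite. *)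
Definition no_algebraicity : Prop :=
  forall (A : list M) (x : M), ~ List.In x A -> ~ acl_fin (List.map realI A) (realI x).

Definition weak_EI : Prop :=
  forall e : imag, is_imag e ->
    exists abar : list M,
      dcl_fin (List.map realI abar) e /\
      forall x, List.In x abar -> acl_fin (e :: nil) (realI x).

End Defs.

(** Weak elimination of imaginaries writes [e] as [dcl^eq] of a real tuple [ab] with
    [ab ⊆ acl^eq e]. If [e ∈ acl^eq A] then, acl^eq being transitive, [ab ⊆ acl^eq A],
    and no algebraicity forces [ab ⊆ A]. Hence [e ∈ acl^eq A ∩ acl^eq B] gives
    [ab ⊆ A ∩ B] and [e ∈ dcl^eq (A ∩ B)]; the converse is [dcl^eq ⊆ acl^eq] and
    monotonicity. *)
From Stdlib Require Import List.
From mathcomp Require Import ssreflect ssrfun ssrbool eqtype ssrnat fintype.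
From Stdlib Require Import Classical FunctionalExtensionality.

Set Implicit Arguments.
Unset Strict Implicit.

Arguments irel {M}.
Arguments irep {M}.

Definition transformation_group (M : Type) (G : (M -> M) -> Prop) : Prop :=
  [/\ G id,
      forall g h, G g -> G h -> G (g \o h) &
      forall g, G g -> exists g', [/\ G g', cancel g g' & cancel g' g]].

Lemma Aut_group (M L : Type) (R : L -> list M -> Prop) :
  transformation_group (Aut R).
Proof.
split.
- by split; [exists id | move=> l s; rewrite map_id].
- move=> g h [[g' gK g'K] Rg] [[h' hK h'K] Rh]; split.
    by exists (h' \o g') => x /=; [rewrite gK hK | rewrite h'K g'K].
  by move=> l s; rewrite -map_map Rg Rh.
- move=> g [[g' gK g'K] Rg]; exists g'; split=> //; split; first by exists g.
  move=> l s; rewrite -(Rg l (map g' s)) map_map.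
  by rewrite (map_ext _ _ g'K) map_id.
Qed.

Lemma finite_representatives (M : Type) (Q : (M -> M) -> Prop) (x : M) (ys : list M) :
  exists hs : list (M -> M), (forall h, In h hs -> Q h) /\
    forall g, Q g -> In (g x) ys -> exists h, In h hs /\ h x = g x.
Proof.
elim: ys => [|y ys [hs [Qhs reps]]]; first by exists nil; split => // g _ [].
case: (classic (exists g, Q g /\ g x = y)) => [[g0 [Qg0 g0x]] | noy].
- exists (g0 :: hs); split; first by move=> h /= [<- | /Qhs].
  move=> g Qg /= [gx | ys_gx]; first by exists g0; split; [left | rewrite g0x].
  by have [h [hs_h hx]] := reps g Qg ys_gx; exists h; split; [right |].
- exists hs; split => // g Qg /= [gx | ]; last exact: reps.
  by case: noy; exists g.
Qed.

Section AlgebraicClosure.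

Variables (M : Type) (G : (M -> M) -> Prop).
Hypothesis G_group : transformation_group G.

Lemma stab_realE (l : list M) g :
  stab G (map (@realI M) l) g <-> G g /\ forall a, In a l -> g a = a.
Proof.
split=> [[Gg fix_l] | [Gg fix_l]]; split=> //.
  move=> a l_a; apply: (fix_l (realI a) _ ord0).
  by apply/in_map_iff; exists a.
by move=> e /in_map_iff [a [<- l_a]] i; apply: fix_l.
Qed.

Lemma stab_inv_comp (e : imag M) g h h' :
  is_imag G e -> G h' -> cancel h h' ->
  irel e (g \o irep e) (h \o irep e) -> G g -> stab G (e :: nil) (h' \o g).
Proof.
case: G_group => _ G_comp _ [_ [_ [_ e_inv]]] Gh' hK ge_he Gg.
split; first exact: G_comp.
move=> f [<- | []]; have := proj1 (e_inv h' Gh' _ _) ge_he.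
suff -> : h' \o (h \o irep e) = irep e by [].
by apply: functional_extensionality => y /=; rewrite hK.
Qed.

Lemma acl_fin_trans (A : list (imag M)) (e : imag M) (x : M) :
  is_imag G e -> acl_fin G A e -> acl_fin G (e :: nil) (realI x) -> acl_fin G A (realI x).
Proof.
case: G_group => _ _ G_inv He [hs1 [stab_hs1 orb_e]] [hs2 [_ orb_x]].
(* Every [g] in [G_A] has [g x = h1 (h2 x)], where [h1 ∈ hs1] agrees with [g] on [e]
   and [h2 ∈ hs2] agrees with [h1^-1 g] on [x]. *)
pose ys := flat_map (fun h1 => map (fun h2 : M -> M => h1 (h2 x)) hs2) hs1.
have [hs [stab_hs reps]] := finite_representatives (stab G A) x ys.
exists hs; split => // g Ag.
suff ys_gx : In (g x) ys.
  by have [h [hs_h hx]] := reps g Ag ys_gx; exists h; split => // i /=; rewrite hx.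
have [h1 [hs1_h1 ge_h1e]] := orb_e g Ag.
have [h1' [Gh1' h1K h1'K]] := G_inv h1 (proj1 (stab_hs1 h1 hs1_h1)).
have [h2 [hs2_h2 /(_ ord0) /= h1'gx]] :=
  orb_x _ (stab_inv_comp He Gh1' h1K ge_h1e (proj1 Ag)).
apply/in_flat_map; exists h1; split => //; apply/in_map_iff; exists h2.
by rewrite -h1'gx h1'K.
Qed.

Lemma dcl_fin_acl_fin (l : list M) (e : imag M) :
  dcl_fin G (map (@realI M) l) e -> acl_fin G (map (@realI M) l) e.
Proof.
case: G_group => G_id _ _ dcl_e; exists (id :: nil); split.
  by move=> h [<- | []]; apply/stab_realE.
by move=> g lg; exists id; split; [left | apply: dcl_e].
Qed.

Lemma aclR_of_dclR (C D : M -> Prop) (e : imag M) :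
  (forall x, C x -> D x) -> dclR G C e -> aclR G D e.
Proof.
move=> CD [l [Cl dcl_e]]; exists l; split; last exact: dcl_fin_acl_fin.
by move=> x /Cl /CD.
Qed.

Lemma acl_fin_real_mem (l : list M) (e : imag M) (x : M) :
  no_algebraicity G -> is_imag G e ->
  acl_fin G (map (@realI M) l) e -> acl_fin G (e :: nil) (realI x) -> In x l.
Proof.
move=> noalg He acl_e acl_x; apply: NNPP => l'x.
exact: noalg l'x (acl_fin_trans He acl_e acl_x).
Qed.

End AlgebraicClosure.

Theorem mainTheorem3 (M L : Type) (R : L -> list M -> Prop)
  (Mcount : countable_type M)
  (Holig : oligomorphic (Aut R))
  (Hnoalg : no_algebraicity (Aut R))
  (Hwei : weak_EI (Aut R))
  (A B : M -> Prop) (e : imag M) (He : is_imag (Aut R) e) :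
  (aclR (Aut R) A e /\ aclR (Aut R) B e) <-> dclR (Aut R) (fun x => A x /\ B x) e.
Proof.
have group := Aut_group R.
split; last by move=> dcl_e; split; apply: (aclR_of_dclR group _ dcl_e) => x [].
move=> [[lA [A_lA acl_A]] [lB [B_lB acl_B]]].
have [ab [dcl_ab ab_acl]] := Hwei e He.
exists ab; split => // x ab_x.
have ab_sub l : acl_fin (Aut R) (map (@realI M) l) e -> In x l.
  by move=> acl_e; exact: (acl_fin_real_mem group Hnoalg He acl_e (ab_acl x ab_x)).
by split; [apply/A_lA/ab_sub | apply/B_lB/ab_sub].
Qed.
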